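(* Let $(X,d,f)$ be a TDS. Then for all $\alpha>0$, $$\sup_{\mu\in M(X,f)}\underline h^{BK}_\mu(f,\alpha)\le h^\alpha_{top}(f,X).$$
   Context: A TDS $(X,d,f)$: compact metric space and continuous $f$; $M(X,f)$ is the set of $f$-invariant Borel probability measures. $d_n^\alpha(x,y)=\max_{0\le i\le n-1}e^{\alpha i}d(f^ix,f^iy)$; $B_n^\alpha(x,\varepsilon)=\{y:d_n^\alpha(x,y)<\varepsilon\}$. Lower $\alpha$-local Brin–Katok entropy: $\underline h^{BK}_\mu(f,\alpha)=\int_X\lim_{\varepsilon\to0}\liminf_{n\to\infty}\frac{-\log\mu(B_n^\alpha(x,\varepsilon))}{n}\,d\mu(x)$. $\alpha$-topological entropy: $E\subset X$ is $(n,\alpha,\varepsilon)$-spanning if every $x\in X$ has $y\in E$ with $d_n^\alpha(x,y)<\varepsilon$; $r_n(f,\alpha,X,\varepsilon)$ is the minimal cardinality of such a set; $h^\alpha_{top}(f,X)=\lim_{\varepsilon\to0}\limsup_{n\to\infty}\frac1n\log r_n(f,\alpha,X,\varepsilon)$. *)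

From HB Require Import structures.
From mathcomp Require Import all_boot all_order all_algebra.
From mathcomp Require Import finmap.
From mathcomp Require Import all_classical all_reals all_analysis.
Set Implicit Arguments. Unset Strict Implicit. Unset Printing Implicit Defensive.
Import Order.TTheory GRing.Theory Num.Theory.
Local Open Scope classical_set_scope.
Local Open Scope ring_scope.

Definition is_metric (R : realType) (X : Type) (dist : X -> X -> R) : Prop :=
  [/\ forall x y, dist x y = 0 <-> x = y,
      forall x y, dist x y = dist y x &
      forall x y z, dist x z <= dist x y + dist y z].

Definition d_open (R : realType) (X : Type) (dist : X -> X -> R) (A : set X) : Prop :=
  forall x, A x -> exists2 e : R, 0 < e & forall y, dist x y < e -> A y.

Definition d_compact (R : realType) (X : Type) (dist : X -> X -> R) : Prop :=
  forall (I : Type) (U : I -> set X),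
    (forall i, d_open dist (U i)) -> (forall x, exists i, U i x) ->
    exists2 J : set I, finite_set J & forall x, exists2 i, J i & U i x.

Definition d_continuous (R : realType) (X : Type) (dist : X -> X -> R)
  (f : X -> X) : Prop :=
  forall x (e : R), 0 < e -> exists2 del : R, 0 < del &
    forall y, dist x y < del -> dist (f x) (f y) < e.

Definition dna (R : realType) (X : Type) (dist : X -> X -> R) (f : X -> X)
  (alpha : R) (n : nat) (x y : X) : R :=
  \big[Num.max/0]_(i < n) (expR (alpha * i%:R) * dist (iter i f x) (iter i f y)).

Definition bowen_ball (R : realType) (X : Type) (dist : X -> X -> R) (f : X -> X)
  (alpha : R) (n : nat) (x : X) (eps : R) : set X :=
  [set y | dna dist f alpha n x y < eps].

Definition neglog (R : realType) (m : \bar R) : \bar R :=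
  if m == 0%E then +oo%E else (- ln (fine m))%:E.

Definition invariant (R : realType) (dm : measure_display) (X : measurableType dm)
  (f : X -> X) (mu : probability X R) : Prop :=
  forall A : set X, measurable A -> mu (f @^-1` A) = mu A.

Definition bk_local (R : realType) (dm : measure_display) (X : measurableType dm)
  (dist : X -> X -> R) (f : X -> X) (mu : probability X R) (alpha : R) (x : X)
  : \bar R :=
  lim ((fun eps : R => limn_einf (fun n : nat =>
          (((n%:R)^-1)%:E * neglog (mu (bowen_ball dist f alpha n x eps)))%E))
       @ 0^'+).

Definition lower_bk (R : realType) (dm : measure_display) (X : measurableType dm)
  (dist : X -> X -> R) (f : X -> X) (mu : probability X R) (alpha : R) : \bar R :=
  (\int[mu]_x bk_local dist f mu alpha x)%E.

Definition spanning (R : realType) (X : choiceType) (dist : X -> X -> R)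
  (f : X -> X) (alpha : R) (n : nat) (eps : R) (E : {fset X}) : Prop :=
  forall x : X, exists2 y, y \in E & dna dist f alpha n x y < eps.

(* r_n(f,alpha,X,eps): minimal cardinality of a spanning set (+oo if none) *)
Definition rn (R : realType) (X : choiceType) (dist : X -> X -> R)
  (f : X -> X) (alpha : R) (n : nat) (eps : R) : \bar R :=
  ereal_inf [set ((#|` E|)%:R)%:E | E in [set E | spanning dist f alpha n eps E]].

Definition elog (R : realType) (r : \bar R) : \bar R :=
  match r with
  | r%:E => (ln r)%:E
  | +oo%E => +oo%E
  | -oo%E => -oo%E
  end.

Definition htop (R : realType) (X : choiceType) (dist : X -> X -> R)
  (f : X -> X) (alpha : R) : \bar R :=
  lim ((fun eps : R => limn_esup (fun n : nat =>
          (((n%:R)^-1)%:E * elog (rn dist f alpha n eps))%E))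
       @ 0^'+).

Definition Minv (R : realType) (dm : measure_display) (X : measurableType dm)
  (f : X -> X) : set (probability X R) :=
  [set mu : probability X R | invariant f mu].

From HB Require Import structures.
From mathcomp Require Import all_boot all_order all_algebra.
From mathcomp Require Import finmap.
From mathcomp Require Import all_classical all_reals all_analysis.
From mathcomp Require Import measurable_realfun.
Import Order.TTheory GRing.Theory Num.Theory HBNNSimple.
Local Open Scope classical_set_scope.
Local Open Scope ring_scope.

(** Fix [c] above [h_top] and a rate [c + 1/(k+1)] slightly above [c].  For
  small [eps] and large [n] there is an [(n, alpha, eps)]-spanning set [E] with
  fewer than [exp (n c)] points; the union of those balls [B_n(y, eps)],
  [y \in E], of measure below [exp (- n (c + 1/(k+1)))] therefore has measure
  below [exp (- n/(k+1))].  If the local entropy at [x] exceeds the rate, then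
  for all large [n] the ball [B_n(x, 2 eps)] is that light, and so is the ball
  [B_n(y, eps)] it contains, where [y \in E] is [eps]-close to [x]; hence [x]
  lies in the light union for all large [n].  The points of local entropy
  above [c] thus form a null set, and the integral is at most [c]. *)

Section BowenMetric.
Context {R : realType} {X : Type}.
Variables (dist : X -> X -> R) (f : X -> X) (alpha : R).
Hypothesis dist_metric : is_metric dist.

Lemma dist_sym x y : dist x y = dist y x.
Proof. by case: dist_metric. Qed.

Lemma dist_triangle x y z : dist x z <= dist x y + dist y z.
Proof. by case: dist_metric. Qed.

Lemma dist_xx x : dist x x = 0.
Proof. by case: dist_metric => h _ _; apply/h. Qed.

Lemma dist_ge0 x y : 0 <= dist x y.
Proof.
have := dist_triangle x y x; rewrite dist_xx (dist_sym y x) => h.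
by rewrite -(@pmulr_rge0 _ 2)// mulr2n mulrDl mul1r.
Qed.

Lemma dna_ge0 n x y : 0 <= dna dist f alpha n x y.
Proof.
apply: (big_ind (fun r => 0 <= r)) => // [a b a0 b0|i _]; first by rewrite le_max a0.
by rewrite mulr_ge0 ?expR_ge0 ?dist_ge0.
Qed.

Lemma dna_sym n x y : dna dist f alpha n x y = dna dist f alpha n y x.
Proof. by apply: eq_bigr => i _; rewrite dist_sym. Qed.

Lemma dna_triangle n x y z :
  dna dist f alpha n x z <= dna dist f alpha n x y + dna dist f alpha n y z.
Proof.
apply: bigmax_le => [|i _]; first by rewrite addr_ge0 ?dna_ge0.
apply: le_trans (lerD (le_bigmax _ _ i) (le_bigmax _ _ i)).
by rewrite -mulrDr ler_wpM2l ?expR_ge0 ?dist_triangle.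
Qed.

Lemma bowen_ball_double n x y (e : R) : dna dist f alpha n x y < e ->
  bowen_ball dist f alpha n y e `<=` bowen_ball dist f alpha n x (2 * e).
Proof.
move=> xy z yz; apply: le_lt_trans (dna_triangle n x y z) _.
by rewrite mulr2n mulrDl mul1r ltrD.
Qed.

Hypothesis f_cont : d_continuous dist f.

Lemma d_continuous_iter i : d_continuous dist (iter i f).
Proof.
elim: i => [|i IH] x e e0 /=; first by exists e.
have [d1 d10 h1] := f_cont (iter i f x) e e0.
have [d2 d20 h2] := IH x d1 d10.
by exists d2 => // y /h2 /h1.
Qed.

Lemma dna_continuous n z r : 0 < r -> exists2 del : R, 0 < del &
  forall w, dist z w < del -> dna dist f alpha n z w < r.
Proof.
move=> r0.
suff [del del0 h] : exists2 del : R, 0 < del & forall w, dist z w < del ->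
    forall i, (i < n)%N -> expR (alpha * i%:R) * dist (iter i f z) (iter i f w) < r.
  by exists del => // w /h hw; apply: bigmax_lt => // i _; apply: hw.
elim: n => [|n [d1 d10 h1]]; first by exists 1.
have [d2 d20 h2] :=
  d_continuous_iter n z (r * expR (- (alpha * n%:R))) (mulr_gt0 r0 (expR_gt0 _)).
exists (Num.min d1 d2); first by rewrite lt_min d10 d20.
move=> w; rewrite lt_min => /andP[/h1 small_before /h2 small_n] i.
rewrite ltnS leq_eqVlt => /orP[/eqP ->|/small_before//].
rewrite -(@ltr_pM2l _ (expR (- (alpha * n%:R)))) ?expR_gt0 //.
by rewrite mulrA -expRD addNr expR0 mul1r mulrC.
Qed.

Lemma bowen_ball_open n y e : d_open dist (bowen_ball dist f alpha n y e).
Proof.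
move=> z yz.
have /(dna_continuous n z)[del del0 h] : 0 < e - dna dist f alpha n y z.
  by rewrite subr_gt0.
exists del => // w /h zw; apply: le_lt_trans (dna_triangle n y z w) _.
by rewrite -ltrBrDl.
Qed.

End BowenMetric.

Lemma exists_expR_lt {R : realType} (N : nat) {t d : R} : 0 < t -> 0 < d ->
  exists2 n : nat, (N <= n)%N & expR (- (n%:R * t)) < d.
Proof.
move=> t0 d0; exists (maxn N (Num.truncn (- ln d / t)).+1); first exact: leq_maxl.
rewrite -[ltRHS]lnK ?posrE // ltr_expR ltrNl -ltr_pdivrMr //.
by apply: lt_le_trans (truncnS_gt _) _; rewrite ler_nat leq_maxr.
Qed.

Section ExtendedReals.
Context {R : realType}.
Local Open Scope ereal_scope.
Implicit Types (u v : (\bar R)^nat) (m r : \bar R).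

Lemma lee_forall_gtEFin (x y : \bar R) :
  (forall c : R, y < c%:E -> x <= c%:E) -> x <= y.
Proof.
case: y => [r| |] h.
- by apply/lee_addgt0Pr => e e0; rewrite -EFinD h // lte_fin ltrDl.
- by rewrite leey.
- case: x h => [x| |] // h.
    by have := h (x - 1)%R (ltNyr _); rewrite lee_fin lerBrDr gerDl ler10.
  by have := h 0%R (ltNyr _).
Qed.

Lemma limn_esupE u : limn_esup u = ereal_inf (range (esups u)).
Proof. by rewrite limn_esup_lim; apply/cvg_lim => //; exact: cvg_esups_inf. Qed.

Lemma limn_einfE u : limn_einf u = ereal_sup (range (einfs u)).
Proof. by rewrite limn_einf_lim; apply/cvg_lim => //; exact: cvg_einfs_sup. Qed.

Lemma limn_esup_lt u c : limn_esup u < c -> exists N, forall n, (N <= n)%N -> u n < c.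
Proof.
rewrite limn_esupE => /ereal_inf_lt [_ [N _ <-]] uN; exists N => n Nn.
by apply: le_lt_trans uN; apply: ereal_sup_ubound; exists n.
Qed.

Lemma limn_einf_gt u c : c < limn_einf u -> exists N, forall n, (N <= n)%N -> c < u n.
Proof.
rewrite limn_einfE => /ereal_sup_gt [_ [N _ <-]] uN; exists N => n Nn.
by apply: lt_le_trans uN _; apply: ereal_inf_lbound; exists n.
Qed.

Lemma le_limn_esup u v : (forall n, u n <= v n) -> limn_esup u <= limn_esup v.
Proof.
move=> uv; rewrite !limn_esupE; apply/ereal_infP => _ [N _ <-].
apply: le_trans (ereal_inf_lbound _) _; first by exists N.
apply: ge_ereal_sup => _ [k Nk <-]; apply: le_trans (uv k) _.
by apply: ereal_sup_ubound; exists k.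
Qed.

Lemma le_limn_einf u v : (forall n, u n <= v n) -> limn_einf u <= limn_einf v.
Proof. by move=> uv; rewrite /limn_einf leeN2; apply: le_limn_esup => n; rewrite leeN2. Qed.

Lemma limn_esup_ge0 u : (forall n, 0 <= u n) -> 0 <= limn_esup u.
Proof. exact: limf_esup_ge0. Qed.

Lemma limn_einf_ge0 u : (forall n, 0 <= u n) -> 0 <= limn_einf u.
Proof.
move=> u0; rewrite limn_einfE; apply: le_trans (ereal_sup_ubound _); last by exists 0%N.
by apply/ereal_infP => _ [k _ <-].
Qed.

Lemma nonincreasing_lim_at_right (F : R -> \bar R) :
  {in `]0%R, +oo[%R &, forall x y, (x <= y)%R -> F y <= F x} ->
  lim (F @ 0^'+) = ereal_sup (F @` [set` `]0%R, +oo[%R]).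
Proof. by move=> F_anti; apply/cvg_lim => //; exact: nonincreasing_at_right_cvge. Qed.

Lemma neglog_ge0 m : 0 <= m -> m <= 1 -> 0 <= neglog m.
Proof.
rewrite /neglog; case: ifP => // _; case: m => //= r; rewrite !lee_fin => r0 r1.
by rewrite oppr_ge0 ln_le0.
Qed.

Lemma le_neglog m1 m2 : 0 <= m1 -> m1 <= m2 -> m2 <= 1 -> neglog m2 <= neglog m1.
Proof.
rewrite /neglog; have [_ _ _ _|m10] := eqVneq m1 0; first by rewrite leey.
case: m1 m10 => [r1| |] // r10 r1_ge0 r12 m21; last by have := le_trans r12 m21.
have r1_gt0 : (0 < r1)%R by rewrite lt_neqAle eq_sym -lee_fin r1_ge0 andbT -eqe.
case: m2 r12 m21 => [r2| |] //= r12 _; rewrite lee_fin in r12.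
rewrite eqe gt_eqF ?(lt_le_trans r1_gt0) //.
by rewrite lee_fin lerN2 ler_ln // posrE // (lt_le_trans r1_gt0).
Qed.

Lemma neglog_gt_lt_expR (n s : R) m : (0 < n)%R -> 0 <= m -> m <= 1 ->
  s%:E < (n^-1)%:E * neglog m -> m < (expR (- (n * s)))%:E.
Proof.
move=> n0; rewrite /neglog; have [-> _ _ _|m0] := eqVneq m 0; first by rewrite lte_fin expR_gt0.
case: m m0 => [r| |] //= r0 r_ge0 _; rewrite -EFinM !lte_fin ltr_pdivlMl // => hs.
have r_gt0 : (0 < r)%R by rewrite lt_neqAle eq_sym -lee_fin r_ge0 andbT -eqe.
by rewrite -[ltLHS]lnK ?posrE // ltr_expR ltrNr.
Qed.

Lemma elog_ge0 r : 1 <= r -> 0 <= elog r.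
Proof. by case: r => //= r; rewrite !lee_fin => /ln_ge0. Qed.

Lemma le_elog r1 r2 : 1 <= r1 -> r1 <= r2 -> elog r1 <= elog r2.
Proof.
case: r1 => [r1| |] //; case: r2 => [r2| |] //= r1_ge1 r12; rewrite ?leey //.
rewrite !lee_fin in r1_ge1 r12 *.
have r1_gt0 : (0 < r1)%R by apply: lt_le_trans r1_ge1.
by rewrite ler_ln // posrE // (lt_le_trans r1_gt0).
Qed.

Lemma elog_lt_expR (n c : R) r : (0 < n)%R -> 1 <= r ->
  (n^-1)%:E * elog r < c%:E -> r < (expR (n * c))%:E.
Proof.
move=> n0; case: r => [r| |] //= r1 h.
  rewrite lee_fin in r1; rewrite -EFinM lte_fin ltr_pdivrMl // in h.
  by rewrite lte_fin -[ltLHS]lnK ?posrE ?(lt_le_trans ltr01) // ltr_expR.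
by rewrite mulry gtr0_sg ?invr_gt0 // mul1e in h.
Qed.

End ExtendedReals.

Section TopologicalEntropy.
Context {R : realType} {X : pointedType}.
Variables (dist : X -> X -> R) (f : X -> X) (alpha : R).
Local Open Scope ereal_scope.

Lemma rn_ge1 n e : 1 <= rn dist f alpha n e.
Proof.
apply/ereal_infP => _ [E E_span <-]; rewrite lee_fin ler1n cardfs_gt0.
have [y yE _] := E_span point.
by apply/eqP => E0; rewrite E0 in yE.
Qed.

Lemma le_rn n e1 e2 : (e1 <= e2)%R -> rn dist f alpha n e2 <= rn dist f alpha n e1.
Proof.
move=> e12; apply/ereal_infP => _ [E E_span <-]; apply: ereal_inf_lbound.
exists E => //= x; have [y yE xy] := E_span x.
by exists y => //; apply: lt_le_trans e12.
Qed.

Definition htop_at (e : R) : \bar R :=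
  limn_esup (fun n => ((n%:R)^-1)%:E * elog (rn dist f alpha n e)).

Lemma le_htop_at e1 e2 : (e1 <= e2)%R -> htop_at e2 <= htop_at e1.
Proof.
move=> e12; apply: le_limn_esup => n; apply: lee_wpmul2l; first by rewrite lee_fin invr_ge0.
by apply: le_elog; [exact: rn_ge1 | exact: le_rn].
Qed.

Lemma htop_at_ge0 e : 0 <= htop_at e.
Proof.
apply: limn_esup_ge0 => n; apply: mule_ge0; first by rewrite lee_fin invr_ge0.
exact/elog_ge0/rn_ge1.
Qed.

Lemma htop_at_le_htop e : (0 < e)%R -> htop_at e <= htop dist f alpha.
Proof.
move=> e0; rewrite /htop nonincreasing_lim_at_right => [|? ? _ _]; last exact: le_htop_at.
by apply: ereal_sup_ubound; exists e; rewrite //= in_itv /= e0.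
Qed.

Lemma htop_ge0 : 0 <= htop dist f alpha.
Proof. exact: le_trans (htop_at_ge0 1%R) (@htop_at_le_htop 1%R (@ltr01 R)). Qed.

End TopologicalEntropy.

Lemma measure_bigsetU_le {R : realType} {dm : measure_display} {X : measurableType dm}
    {I : Type} (mu : {measure set X -> \bar R}) (s : seq I) (P : pred I) (F : I -> set X) :
  (forall y, measurable (F y)) ->
  (mu (\big[setU/set0]_(y <- s | P y) F y) <= \sum_(y <- s | P y) mu (F y))%E.
Proof.
move=> mF; elim: s => [|y s IH]; first by rewrite !big_nil measure0.
rewrite !big_cons; case: ifP => // _.
apply: le_trans (measureU2 _ _ _) _; [exact: mF | exact: bigsetU_measurable |].
exact: leeD2l.
Qed.

Lemma bigsetU_mem {T I : eqType} {s : seq I} {P : pred I} {F : I -> set T} {y : I} {x : T} :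
  y \in s -> P y -> F y x -> (\big[setU/set0]_(i <- s | P i) F i) x.
Proof.
elim: s => [//|z s IH]; rewrite in_cons big_cons => /orP[/eqP <-|ys] Py Fx.
  by rewrite Py; left.
by case: ifP => _; [right|]; exact: IH.
Qed.

Section LocalEntropy.
Context {R : realType} {dm : measure_display} {X : measurableType dm}.
Variables (dist : X -> X -> R) (f : X -> X) (alpha : R) (mu : probability X R).
Hypothesis dist_metric : is_metric dist.
Hypothesis f_cont : d_continuous dist f.
Hypothesis borel : @measurable dm X = <<s [set A | d_open dist A] >>.
Local Open Scope ereal_scope.

Lemma bowen_ball_measurable n y e : measurable (bowen_ball dist f alpha n y e).
Proof. by rewrite borel; apply: sub_sigma_algebra; exact: bowen_ball_open. Qed.

Definition bk_local_at (x : X) (e : R) : \bar R :=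
  limn_einf (fun n => ((n%:R)^-1)%:E * neglog (mu (bowen_ball dist f alpha n x e))).

Lemma le_bk_local_at x e1 e2 : (e1 <= e2)%R -> bk_local_at x e2 <= bk_local_at x e1.
Proof.
move=> e12; apply: le_limn_einf => n; apply: lee_wpmul2l; first by rewrite lee_fin invr_ge0.
apply: le_neglog => //; last exact: probability_le1 (bowen_ball_measurable _ _ _).
apply: le_measure; rewrite ?inE; try exact: bowen_ball_measurable.
by move=> z /lt_le_trans; apply.
Qed.

Lemma bk_local_at_ge0 x e : 0 <= bk_local_at x e.
Proof.
apply: limn_einf_ge0 => n; apply: mule_ge0; first by rewrite lee_fin invr_ge0.
by apply: neglog_ge0 => //; exact: probability_le1 (bowen_ball_measurable _ _ _).
Qed.

Lemma bk_localE x :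
  bk_local dist f mu alpha x = ereal_sup (bk_local_at x @` [set` `]0%R, +oo[%R]).
Proof.
by rewrite /bk_local nonincreasing_lim_at_right // => ? ? _ _; exact: le_bk_local_at.
Qed.

Lemma bk_local_ge0 x : 0 <= bk_local dist f mu alpha x.
Proof.
rewrite bk_localE; apply: le_trans (bk_local_at_ge0 x 1) _.
by apply: ereal_sup_ubound; exists 1%R; rewrite //= in_itv /= ltr01.
Qed.

Variable c : R.
Hypothesis htop_at_lt : forall e, (0 < e)%R -> htop_at dist f alpha e < c%:E.

Definition rate (k : nat) : R := c + (k.+1%:R)^-1.
Definition radius (m : nat) : R := (m.+1%:R)^-1.

Lemma radius_gt0 m : (0 < radius m)%R.
Proof. by rewrite invr_gt0. Qed.

Definition small_spanning (m n : nat) (E : {fset X}) : Prop :=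
  spanning dist f alpha n (radius m) E /\ (#|` E|%:R < expR (n%:R * c))%R.

Lemma small_spanning_ev m :
  exists N, forall n, (N <= n)%N -> exists E, small_spanning m n E.
Proof.
have [N hN] := limn_esup_lt _ _ (htop_at_lt (radius m) (radius_gt0 m)).
exists N.+1 => n Nn; have n0 : (0 < n%:R :> R)%R by rewrite ltr0n (leq_trans _ Nn).
have /ereal_inf_lt [_ [E E_span <-]] :=
  elog_lt_expR _ _ _ n0 (rn_ge1 _ _ _ _ _) (hN n (ltnW Nn)).
by rewrite lte_fin => E_small; exists E.
Qed.

(* When no small spanning set exists the cover is [setT]; by
   [small_spanning_ev] this happens only for finitely many [n]. *)
Definition light_cover (k m n : nat) : set X :=
  match pselect (exists E, small_spanning m n E) with
  | left hE => \big[setU/set0]_(y <- projT1 (cid hE) |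
       mu (bowen_ball dist f alpha n y (radius m)) < (expR (- (n%:R * rate k)))%:E)
       bowen_ball dist f alpha n y (radius m)
  | right _ => setT
  end.

Lemma light_cover_measurable k m n : measurable (light_cover k m n).
Proof.
rewrite /light_cover; case: pselect => [hE|_] //.
by apply: bigsetU_measurable => y _; exact: bowen_ball_measurable.
Qed.

Lemma light_cover_small k m n : (exists E, small_spanning m n E) ->
  mu (light_cover k m n) <= (expR (- (n%:R * (k.+1%:R)^-1)))%:E.
Proof.
rewrite /light_cover; case: pselect => [hE _|//]; case: (cid hE) => E [_ E_small] /=.
set a := expR (- (n%:R * rate k)).
apply: le_trans (measure_bigsetU_le mu _ _ _ (fun y => bowen_ball_measurable n y _)) _.
apply: le_trans; first by apply: (lee_sum (g := fun=> a%:E)) => y /ltW.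
rewrite sumEFin lee_fin big_mkcond /=.
apply: le_trans (_ : \sum_(y <- E) a <= _)%R.
  by apply: ler_sum => y _; case: ifP; rewrite ?expR_ge0.
have -> : (\sum_(y <- E) a = #|` E|%:R * a)%R.
  by rewrite card_fset_sum1 natr_sum mulr_suml; apply: eq_bigr => y _; rewrite mul1r.
apply: le_trans (_ : expR (n%:R * c) * a <= _)%R; first by rewrite ler_wpM2r ?expR_ge0 ?ltW.
by rewrite /a -expRD /rate mulrDr opprD addrA addrN add0r.
Qed.

Lemma mem_light_cover k m n x :
  mu (bowen_ball dist f alpha n x (2 * radius m)) < (expR (- (n%:R * rate k)))%:E ->
  light_cover k m n x.
Proof.
move=> x_light; rewrite /light_cover; case: pselect => [hE|//].
case: (cid hE) => E [E_span _] /=; have [y yE xy] := E_span x.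
apply: (bigsetU_mem yE); last by rewrite /bowen_ball /= dna_sym.
apply: le_lt_trans x_light; apply: le_measure; rewrite ?inE; try exact: bowen_ball_measurable.
exact: bowen_ball_double.
Qed.

Definition eventually_light (k m : nat) : set X :=
  \bigcup_N \bigcap_(n in [set n | (N <= n)%N]) light_cover k m n.

Lemma eventually_light_negligible k m : mu.-negligible (eventually_light k m).
Proof.
apply: negligible_bigcup => N; set A := \bigcap_(n in _) _.
have mA : measurable A.
  by apply: bigcap_measurable => [|n _]; [exists N => /= | exact: light_cover_measurable].
exists A; split => //; apply/eqP; rewrite eq_le measure_ge0 andbT.
apply/lee_addgt0Pr => d d0; rewrite add0e.
have [N0 small_ev] := small_spanning_ev m.
have k_gt0 : (0 < (k.+1%:R)^-1 :> R)%R by rewrite invr_gt0.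
have [n /[!geq_max] /andP[Nn N0n] n_small] := exists_expR_lt (maxn N N0) k_gt0 d0.
apply: (@le_trans _ _ (mu (light_cover k m n))).
  apply: le_measure; rewrite ?inE; [exact: mA | exact: light_cover_measurable |].
  by move=> x /(_ n Nn).
by apply: le_trans (light_cover_small _ _ _ (small_ev n N0n)) _; rewrite lee_fin ltW.
Qed.

Lemma rate_lt (y : \bar R) : c%:E < y -> exists k, (rate k)%:E < y.
Proof.
case: y => [b| |] //; last by exists 0%N; rewrite ltey.
rewrite lte_fin => cb; exists (Num.truncn ((b - c)^-1)).
have bc : (0 < b - c)%R by rewrite subr_gt0.
rewrite lte_fin /rate -ltrBrDl -[X in (_ < X)%R]invrK ltf_pV2 ?posrE ?invr_gt0 ?ltr0n //.
exact: truncnS_gt.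
Qed.

Lemma radius_le e : (0 < e)%R -> exists m, (2 * radius m <= e)%R.
Proof.
move=> e0; exists (Num.truncn (2 / e)); rewrite /radius.
rewrite -(@ler_pM2r _ (Num.truncn (2 / e)).+1%:R) ?ltr0n // -mulrA mulVf ?pnatr_eq0 // mulr1.
by rewrite mulrC -ler_pdivrMr //; apply/ltW/truncnS_gt.
Qed.

Lemma high_bk_local_eventually_light x : c%:E < bk_local dist f mu alpha x ->
  exists k m, eventually_light k m x.
Proof.
move=> /rate_lt[k]; rewrite bk_localE => /ereal_sup_gt[_ [e /= e_pos <-]] k_lt.
rewrite in_itv /= andbT in e_pos; have [m m_le] := radius_le _ e_pos.
have /limn_einf_gt[N hN] : (rate k)%:E < bk_local_at x (2 * radius m).
  exact: lt_le_trans k_lt (le_bk_local_at x _ _ m_le).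
exists k, m, N.+1 => // n /= Nn; apply: mem_light_cover.
have := hN n (ltnW Nn); apply: neglog_gt_lt_expR.
- by rewrite ltr0n (leq_trans _ Nn).
- exact: measure_ge0.
- exact/probability_le1/bowen_ball_measurable.
Qed.

Lemma ae_bk_local_le : {ae mu, forall x, bk_local dist f mu alpha x <= c%:E}.
Proof.
have : mu.-negligible (\bigcup_k \bigcup_m eventually_light k m).
  apply: negligible_bigcup => k; apply: negligible_bigcup => m.
  exact: eventually_light_negligible.
apply: negligibleS => x /= /negP; rewrite -ltNge.
by move=> /high_bk_local_eventually_light[k [m x_light]]; exists k => //; exists m.
Qed.

(* [bk_local] need not be measurable, so it is compared with [c] through the
   simple functions below it. *)
Lemma lower_bk_le : (0 <= c)%R -> lower_bk dist f mu alpha <= c%:E.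
Proof.
move=> c0; rewrite /lower_bk ge0_integralTE; last exact: bk_local_ge0.
apply: ge_ereal_sup => _ [h h_le <-]; rewrite -integralT_nnsfun.
apply: (@le_trans _ _ (\int[mu]_x (cst c%:E) x)).
  apply: ae_ge0_le_integral => //.
  - by move=> x _; rewrite lee_fin; exact: fun_ge0.
  - by apply/measurable_EFinP; exact: measurable_funP.
  - by apply: filterS ae_bk_local_le => x x_le _; exact: le_trans (h_le x) x_le.
rewrite integral_cst // -[leRHS]mule1; apply: lee_wpmul2l; first by rewrite lee_fin.
exact: probability_le1.
Qed.

End LocalEntropy.

Theorem theorem4p4 (R : realType) (dm : measure_display) (X : measurableType dm)
  (dist : X -> X -> R) (f : X -> X)
  (hmetric : is_metric dist) (hcompact : d_compact dist)
  (hborel : @measurable dm X = <<s [set A | d_open dist A] >>)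
  (hf : d_continuous dist f)
  (alpha : R) (halpha : 0 < alpha) :
  (ereal_sup [set lower_bk dist f mu alpha
               | mu in @Minv R dm X f]
   <= htop dist f alpha)%E.
Proof.
apply: ge_ereal_sup => _ [mu _ <-].
apply: lee_forall_gtEFin => c htop_lt_c.
have htop_at_lt e : 0 < e -> (htop_at dist f alpha e < c%:E)%E.
  by move=> e0; apply: le_lt_trans htop_lt_c; exact: htop_at_le_htop.
apply: lower_bk_le => //.
by rewrite -lee_fin; apply: le_trans (htop_ge0 dist f alpha) (ltW htop_lt_c).
Qed.
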